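(* Let $n,m\ge 1$ be integers and consider the shifting-checkers game with $n$ black and $m$ white checkers (defined in the context). Every optimal solution of the game (i.e. every move sequence from the initial configuration to the final configuration using the minimum possible number of moves) uses only the following four kinds of moves: (1) a black checker slides one position to the right into the vacancy; (2) a white checker slides one position to the left into the vacancy; (3) a black checker jumps to the right over an adjacent white checker into the vacancy; (4) a white checker jumps to the left over an adjacent black checker into the vacancy.
   Context: The game: there are $n+m+1$ positions in a row, numbered $1,\dots,n+m+1$. A configuration assigns to each position a black checker, a white checker, or nothing, with exactly one empty position (the vacancy). Writing $b$ for black, $w$ for white and $O$ for the vacancy, the initial configuration is $b^nOw^m$ (blacks at $1,\dots,n$, vacancy at $n+1$, whites at $n+2,\dots,n+m+1$) and the final configuration is $w^mOb^n$. A move is either a slide (a checker at a position adjacent to the vacancy moves into the vacancy) or a jump (a checker at distance two from the vacancy jumps over the checker between them into the vacancy); moves in either direction and over checkers of either colour are permitted. A solution is a finite sequence of moves transforming the initial configuration into the final one; it is optimal if no solution has fewer moves. *)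

From HB Require Import structures.
From mathcomp Require Import all_boot.
Set Implicit Arguments. Unset Strict Implicit. Unset Printing Implicit Defensive.

(* Cells of the board. Positions 1..n+m+1 of the paper are represented by
   indices 0..n+m of a sequence. *)
Inductive cell := Black | White | Empty.

Definition cell_eqb (a b : cell) : bool :=
  match a, b with
  | Black, Black | White, White | Empty, Empty => true
  | _, _ => false end.
Lemma cell_eqP : Equality.axiom cell_eqb.
Proof. by case; case; constructor. Qed.
HB.instance Definition _ := hasDecEq.Build cell cell_eqP.

Definition config := seq cell.

Definition init_config (n m : nat) : config := nseq n Black ++ Empty :: nseq m White.
Definition final_config (n m : nat) : config := nseq m White ++ Empty :: nseq n Black.

Record move := Move { src : nat; dst : nat }.

Definition dist (a b : nat) : nat := (a - b) + (b - a).

Definition legal (c : config) (mv : move) : Prop :=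
  src mv < size c /\ dst mv < size c /\
  nth Empty c (dst mv) = Empty /\ nth Empty c (src mv) <> Empty /\
  (dist (src mv) (dst mv) = 1 \/
   (dist (src mv) (dst mv) = 2 /\
    nth Empty c ((src mv + dst mv) %/ 2) <> Empty)).

Definition apply_move (c : config) (mv : move) : config :=
  set_nth Empty (set_nth Empty c (dst mv) (nth Empty c (src mv))) (src mv) Empty.

Fixpoint runs (c : config) (ms : seq move) (c' : config) : Prop :=
  match ms with
  | [::] => c = c'
  | mv :: ms' => legal c mv /\ runs (apply_move c mv) ms' c'
  end.

Definition solution (n m : nat) (ms : seq move) : Prop :=
  runs (init_config n m) ms (final_config n m).

Definition optimal_solution (n m : nat) (ms : seq move) : Prop :=
  solution n m ms /\ forall ms', solution n m ms' -> size ms <= size ms'.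

Definition allowed_kind (c : config) (mv : move) : Prop :=
  (nth Empty c (src mv) = Black /\ dst mv = (src mv).+1) \/
  (nth Empty c (src mv) = White /\ src mv = (dst mv).+1) \/
  (nth Empty c (src mv) = Black /\ dst mv = (src mv).+2 /\
   nth Empty c (src mv).+1 = White) \/
  (nth Empty c (src mv) = White /\ src mv = (dst mv).+2 /\
   nth Empty c (dst mv).+1 = Black).

Fixpoint all_allowed (c : config) (ms : seq move) : Prop :=
  match ms with
  | [::] => True
  | mv :: ms' => allowed_kind c mv /\ all_allowed (apply_move c mv) ms'
  end.

(* Call distance of a configuration the number of inversions (a black checker
   left of a white one) plus the number of checkers on the wrong side of the
   vacancy (blacks to its left, whites to its right).  Every move of an allowed
   kind lowers the distance by exactly one, and the classical greedy solution
   uses only such moves, so it has nm + n + m moves.  Conversely, a move lowers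
   4 * inversions + wrong side by at most 4 - 3s - u, where s = 1 for a slide and
   u = 1 for a move not of an allowed kind.  As every solution makes at least
   n + m slides, a solution of length L with N moves not of an allowed kind
   satisfies 4nm + n + m + 3(n + m) + N <= 4L, so an optimal one has N = 0. *)

From mathcomp Require Import all_boot zify.
Set Implicit Arguments. Unset Strict Implicit. Unset Printing Implicit Defensive.

(** * Moves inside a window *)

Lemma nth_cat_shift (X L : config) k : nth Empty (X ++ L) (k + size X) = nth Empty L k.
Proof. by rewrite nth_cat ltnNge leq_addl addnK. Qed.

Lemma set_nth_cat_shift (X L : config) k y :
  set_nth Empty (X ++ L) (k + size X) y = X ++ set_nth Empty L k y.
Proof. by elim: X => [|x X IH]; rewrite ?addn0 // /= addnS /= IH. Qed.

Lemma dist_shift s d k : dist (s + k) (d + k) = dist s d.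
Proof. rewrite /dist; lia. Qed.

(* Offsets are written [s + size X], so that [0 + size X], [1 + size X] and
   [2 + size X] are convertible to [size X], [(size X).+1] and [(size X).+2]. *)
Lemma legal_cat X L s d :
  legal (X ++ L) (Move (s + size X) (d + size X)) <-> legal L (Move s d).
Proof.
have mid : (s + size X + (d + size X)) %/ 2 = (s + d) %/ 2 + size X.
  by rewrite -(addnACA s) addnn -muln2 addnC divnMDl // addnC.
by rewrite /legal /= mid dist_shift !nth_cat_shift size_cat !(addnC _ (size X)) !ltn_add2l.
Qed.

Lemma apply_move_cat X L s d :
  apply_move (X ++ L) (Move (s + size X) (d + size X)) = X ++ apply_move L (Move s d).
Proof. by rewrite /apply_move /= nth_cat_shift !set_nth_cat_shift. Qed.

Definition allowed_kindb (c : config) (mv : move) : bool :=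
  [|| (nth Empty c (src mv) == Black) && (dst mv == (src mv).+1),
      (nth Empty c (src mv) == White) && (src mv == (dst mv).+1),
      [&& nth Empty c (src mv) == Black, dst mv == (src mv).+2 & nth Empty c (src mv).+1 == White] |
      [&& nth Empty c (src mv) == White, src mv == (dst mv).+2 & nth Empty c (dst mv).+1 == Black]].

Lemma allowed_kindP c mv : allowed_kindb c mv -> allowed_kind c mv.
Proof.
by case/or4P=> [/andP[/eqP ? /eqP ?] | /andP[/eqP ? /eqP ?]
  | /and3P[/eqP ? /eqP ? /eqP ?] | /and3P[/eqP ? /eqP ? /eqP ?]]; rewrite /allowed_kind; tauto.
Qed.

Lemma allowed_kindb_cat X L s d :
  allowed_kindb (X ++ L) (Move (s + size X) (d + size X)) = allowed_kindb L (Move s d).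
Proof.
by rewrite /allowed_kindb /= -!addSn !nth_cat_shift !eqn_add2r.
Qed.

Inductive local_move : config -> nat -> nat -> config -> Prop :=
| SlideRight a : a != Empty -> local_move [:: a; Empty] 0 1 [:: Empty; a]
| SlideLeft a : a != Empty -> local_move [:: Empty; a] 1 0 [:: a; Empty]
| JumpRight a b : a != Empty -> b != Empty -> local_move [:: a; b; Empty] 0 2 [:: Empty; b; a]
| JumpLeft a b : a != Empty -> b != Empty -> local_move [:: Empty; b; a] 2 0 [:: a; b; Empty].

Lemma local_move_count L s d L' : local_move L s d L' -> count_mem Empty L = 1.
Proof. by case=> [a|a|a b|a b] /negbTE-aE; rewrite /= aE // => /negbTE->. Qed.

Lemma local_move_cat X Y L s d L' : local_move L s d L' ->
  legal (X ++ L ++ Y) (Move (s + size X) (d + size X)) /\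
  apply_move (X ++ L ++ Y) (Move (s + size X) (d + size X)) = X ++ L' ++ Y.
Proof.
rewrite legal_cat apply_move_cat => hL; split; last by case: hL.
case: hL => [a|a|a b|a b] /eqP-aE; try move=> /eqP-bE.
all: by rewrite /legal /dist /=; do 4 (split => //); first [by left | by right].
Qed.

Variant move_split (c : config) (mv : move) : Prop :=
  MoveSplit (X Y L : config) s d (L' : config) of Empty \notin X & c = X ++ L ++ Y &
    mv = Move (s + size X) (d + size X) & local_move L s d L'.

Lemma move_split_intro c X Y L s d L' :
  count_mem Empty c = 1 -> c = X ++ L ++ Y -> local_move L s d L' ->
  move_split c (Move (s + size X) (d + size X)).
Proof.
move=> hc ec hL; apply: (MoveSplit _ ec erefl hL); apply/count_memPn.
by move: hc; rewrite ec !count_cat (local_move_count hL); lia.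
Qed.

Lemma cat_take_nth2 (c : config) k : k.+1 < size c ->
  c = take k c ++ [:: nth Empty c k; nth Empty c k.+1] ++ drop k.+2 c.
Proof.
by move=> h; rewrite -{1}(cat_take_drop k c) (drop_nth Empty) ?(drop_nth Empty (n := k.+1)) //; lia.
Qed.

Lemma cat_take_nth3 (c : config) k : k.+2 < size c ->
  c = take k c ++ [:: nth Empty c k; nth Empty c k.+1; nth Empty c k.+2] ++ drop k.+3 c.
Proof.
move=> h; rewrite -{1}(cat_take_drop k c) (drop_nth Empty) ?(drop_nth Empty (n := k.+1))
  ?(drop_nth Empty (n := k.+2)) //; lia.
Qed.

Lemma legal_move_split c mv : count_mem Empty c = 1 -> legal c mv -> move_split c mv.
Proof.
case: mv => s d hc [/= hs [hd [hE [/eqP-hs' hdist]]]].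
have sizeX k : k < size c -> size (take k c) = k by move=> h; rewrite size_takel // ltnW.
case: hdist => [hdist | [hdist /eqP-hm]]; rewrite /dist in hdist.
- have [e|e] : d = s.+1 \/ s = d.+1 by lia.
  + subst d; have := cat_take_nth2 hd; rewrite hE.
    move=> /(move_split_intro hc)/(_ (SlideRight hs')).
    by rewrite sizeX.
  + subst s; have := cat_take_nth2 hs; rewrite hE.
    move=> /(move_split_intro hc)/(_ (SlideLeft hs')).
    by rewrite sizeX.
- have [e|e] : d = s.+2 \/ s = d.+2 by lia.
  + subst d; rewrite (_ : s + s.+2 = s.+1 * 2) ?mulnK // in hm; last by lia.
    have := cat_take_nth3 hd; rewrite hE.
    move=> /(move_split_intro hc)/(_ (JumpRight hs' hm)).
    by rewrite sizeX.
  + subst s; rewrite (_ : d.+2 + d = d.+1 * 2) ?mulnK // in hm; last by lia.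
    have := cat_take_nth3 hs; rewrite hE.
    move=> /(move_split_intro hc)/(_ (JumpLeft hs' hm)).
    by rewrite sizeX.
Qed.

Lemma count_apply_move c mv x : count_mem Empty c = 1 -> legal c mv ->
  count_mem x (apply_move c mv) = count_mem x c.
Proof.
move=> hc hl; case: (legal_move_split hc hl) => X Y L s d L' _ -> -> hL.
rewrite (proj2 (local_move_cat X Y hL)) !count_cat.
by case: hL => *; rewrite /=; lia.
Qed.

(** * Potentials *)

Fixpoint inversions (c : config) : nat :=
  if c is x :: c' then (x == Black) * count_mem White c' + inversions c' else 0.

Fixpoint wrong_side (c : config) : nat :=
  if c is x :: c' then
    if x == Empty then count_mem White c' else (x == Black) + wrong_side c'
  else 0.

Lemma inversions_cat X Z :
  inversions (X ++ Z) = inversions X + inversions Z + count_mem Black X * count_mem White Z.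
Proof.
elim: X => [|x X IH] /=; rewrite ?addn0 // IH count_cat.
by case: (x == Black); rewrite /= ?mul0n ?mul1n ?add0n ?mulnDl; lia.
Qed.

Lemma wrong_side_cat X Z :
  Empty \notin X -> wrong_side (X ++ Z) = count_mem Black X + wrong_side Z.
Proof.
elim: X => [|x X IH] //=; rewrite inE negb_or eq_sym => /andP[/negbTE-> /IH->].
by rewrite addnA.
Qed.

Definition is_slide (mv : move) : bool := dist (src mv) (dst mv) == 1.

Lemma potential_step c mv : count_mem Empty c = 1 -> legal c mv ->
  4 * inversions c + wrong_side c + 3 * is_slide mv + ~~ allowed_kindb c mv <=
  4 + 4 * inversions (apply_move c mv) + wrong_side (apply_move c mv).
Proof.
move=> hc hl; case: (legal_move_split hc hl) => X Y L s d L' nX -> -> hL.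
rewrite (proj2 (local_move_cat X Y hL)) allowed_kindb_cat /is_slide /= dist_shift.
rewrite !inversions_cat !(wrong_side_cat _ nX).
by case: hL => [[]|[]|[] []|[] []] // *; rewrite /=; nia.
Qed.

Lemma distance_step c mv : count_mem Empty c = 1 -> legal c mv -> allowed_kindb c mv ->
  inversions (apply_move c mv) + wrong_side (apply_move c mv) + 1 =
  inversions c + wrong_side c.
Proof.
move=> hc hl; case: (legal_move_split hc hl) => X Y L s d L' nX -> -> hL.
rewrite (proj2 (local_move_cat X Y hL)) allowed_kindb_cat !inversions_cat !(wrong_side_cat _ nX).
by case: hL => [[]|[]|[] []|[] []] // *; rewrite /=; nia.
Qed.

Fixpoint disallowed_moves (c : config) (ms : seq move) : nat :=
  if ms is mv :: ms' then ~~ allowed_kindb c mv + disallowed_moves (apply_move c mv) ms'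
  else 0.

Lemma all_allowed_disallowed0 c ms : disallowed_moves c ms = 0 -> all_allowed c ms.
Proof.
elim: ms c => [|mv ms IH] c //=.
by case: (boolP (allowed_kindb c mv)) => // /allowed_kindP ? /= /IH.
Qed.

Lemma runs_potential c ms c' : count_mem Empty c = 1 -> runs c ms c' ->
  4 * inversions c + wrong_side c + 3 * count is_slide ms + disallowed_moves c ms <=
  4 * size ms + 4 * inversions c' + wrong_side c'.
Proof.
elim: ms c => [|mv ms IH] c hc /=; first by move=> ->; lia.
case=> hl /IH; rewrite count_apply_move // => /(_ hc).
by have := potential_step hc hl; lia.
Qed.

Lemma notin_nseq k x : x != Empty -> Empty \notin nseq k x.
Proof. by rewrite mem_nseq negb_and eq_sym => ->; rewrite orbT. Qed.

Lemma inversions_nseq k x : inversions (nseq k x) = 0.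
Proof. by elim: k => //= k ->; case: x; rewrite ?count_nseq. Qed.

Lemma init_config_stats n m :
  [/\ count_mem Empty (init_config n m) = 1, inversions (init_config n m) = n * m &
      wrong_side (init_config n m) = n + m].
Proof.
rewrite /init_config inversions_cat wrong_side_cat ?notin_nseq //= inversions_nseq.
by rewrite count_cat /= !count_nseq /= inversions_nseq; split; lia.
Qed.

Lemma final_config_stats n m :
  inversions (final_config n m) = 0 /\ wrong_side (final_config n m) = 0.
Proof.
rewrite /final_config inversions_cat wrong_side_cat ?notin_nseq //= inversions_nseq.
by rewrite !count_nseq /= inversions_nseq.
Qed.

(** * Counting slides *)

Definition checkers (c : config) : config := [seq x <- c | x != Empty].

(* After t slides the vacancy sits at a position of the parity of n + t, and at
   most t + i + 1 - n (truncated) white checkers precede the (i+1)-st black one.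
   In the final configuration all m whites precede every black, which forces
   t >= n + m - 1, and the parity then forces t >= n + m. *)
Definition black_window n t i := i.+1 + (t + i.+1 - n).

Definition black_bound n t (s : config) :=
  forall i, i < n -> i < count_mem Black (take (black_window n t i) s).

Definition slide_invariant n t (c : config) :=
  ~~ odd (index Empty c + n + t) /\ black_bound n t (checkers c).

Lemma take_cat_shift (X Z : config) k : take (k + size X) (X ++ Z) = X ++ take k Z.
Proof. by rewrite take_cat ltnNge leq_addl /= addnK. Qed.

Lemma count_take_swap (X Y : config) p q k x : k != (size X).+1 ->
  count_mem x (take k (X ++ [:: p; q] ++ Y)) = count_mem x (take k (X ++ [:: q; p] ++ Y)).
Proof.
move=> hk; rewrite !take_cat; case: ifP => // _.
case e: (k - size X) => [|[|j]] //=; first by move: hk; rewrite (_ : k = (size X).+1) ?eqxx //; lia.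
by rewrite !count_cat /=; lia.
Qed.

Lemma black_bound_swap n t (X Y : config) p q : ~~ odd (size X + n + t) ->
  black_bound n t (X ++ [:: p; q] ++ Y) -> black_bound n t (X ++ [:: q; p] ++ Y).
Proof.
move=> hpar h i lin.
(* Only the window ending between [p] and [q] changes; parity leaves it no
   slack, so the window of the next black checker ends just after [q]. *)
case e: (black_window n t i == (size X).+1); last by rewrite -count_take_swap ?e //; apply: h.
move/eqP: e => e; have h1 := h i lin; rewrite e -[(size X).+1]/(1 + size X) !take_cat_shift in h1 *.
rewrite !count_cat /= in h1 *.
have key : p = Black -> q != Black -> i < count_mem Black X.
  move=> pB qB; subst p.
  have l2 : i.+1 < n by move: e hpar; rewrite /black_window; case: (leqP n (t + i.+1)); lia.
  have := h i.+1 l2; clear h; rewrite (_ : black_window n t i.+1 = 2 + size X); last first.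
    by move: e; rewrite /black_window; lia.
  by rewrite take_cat_shift count_cat /= take0; case: q qB => //= _; lia.
by clear h; case: p q h1 key => [] [] /= h1 key; try lia; have := key erefl isT; lia.
Qed.

Lemma checkers_id (X : config) : Empty \notin X -> checkers X = X.
Proof. by move=> nX; apply/all_filterP/allP => x xX; apply: contraNneq nX => <-. Qed.

Lemma black_bound_slide n t s : black_bound n t s -> black_bound n t.+1 s.
Proof.
move=> h i /h lt; apply: leq_trans lt _.
have le : black_window n t i <= black_window n t.+1 i by rewrite /black_window; lia.
by rewrite -(subnKC le) takeD count_cat leq_addr.
Qed.

Lemma slide_invariant_step n t c mv : count_mem Empty c = 1 -> legal c mv ->
  slide_invariant n t c -> slide_invariant n (t + is_slide mv) (apply_move c mv).
Proof.
move=> hc hl; case: (legal_move_split hc hl) => X Y L s d L' nX -> -> hL.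
rewrite (proj2 (local_move_cat X Y hL)) /slide_invariant /is_slide /= dist_shift.
rewrite /checkers !filter_cat -/(checkers X) (checkers_id nX) !(index_cat _ X) (negbTE nX).
case: hL => [a|a|a b|a b] /negbTE-aE; try move=> /negbTE-bE; rewrite /= ?aE ?bE /=.
- by rewrite (addn1 t) => -[hp /black_bound_slide]; split; first by move: hp; lia.
- by rewrite (addn1 t) => -[hp /black_bound_slide]; split; first by move: hp; lia.
- rewrite (addn0 t) => -[hp hb]; split; first by move: hp; lia.
  by apply: black_bound_swap hb; move: hp; lia.
- rewrite (addn0 t) => -[hp hb]; split; first by move: hp; lia.
  by apply: black_bound_swap hb; move: hp; lia.
Qed.

Lemma runs_slide_invariant n t c ms c' : count_mem Empty c = 1 -> runs c ms c' ->
  slide_invariant n t c -> slide_invariant n (t + count is_slide ms) c'.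
Proof.
elim: ms t c => [|mv ms IH] t c hc /=; first by move=> -> ; rewrite addn0.
case=> hl /IH; rewrite count_apply_move // addnA => /(_ _ hc) IHt.
by move=> /(slide_invariant_step hc hl); apply: IHt.
Qed.

Lemma slide_invariant_init n m : slide_invariant n 0 (init_config n m).
Proof.
rewrite /slide_invariant /checkers /init_config filter_cat /=.
rewrite -/(checkers (nseq n Black)) -/(checkers (nseq m White)).
rewrite !checkers_id ?notin_nseq // index_cat (negbTE (notin_nseq _ _)) //= size_nseq.
split; first by lia.
move=> i lin; rewrite /black_window (_ : 0 + i.+1 - n = 0) ?addn0; last by lia.
rewrite take_cat size_nseq; case: ifP => h.
- by rewrite take_nseq ?count_nseq /=; lia.
- by rewrite (_ : i.+1 - n = 0) ?take0 ?cats0 ?count_nseq /=; lia.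
Qed.

Lemma slide_invariant_final n m t : 0 < n -> 0 < m ->
  slide_invariant n t (final_config n m) -> n + m <= t.
Proof.
move=> n0 m0; rewrite /slide_invariant /checkers /final_config filter_cat /=.
rewrite -/(checkers (nseq n Black)) -/(checkers (nseq m White)).
rewrite !checkers_id ?notin_nseq // index_cat (negbTE (notin_nseq _ _)) //= size_nseq addn0.
move=> [hp /(_ 0 n0)]; rewrite /black_window.
have [|k_le_m] := ltnP m (1 + (t + 1 - n)); first by move: hp; lia.
by rewrite takel_cat ?size_nseq // take_nseq // count_nseq.
Qed.

(** * The classical solution *)

Fixpoint alternating (x y : cell) i : config :=
  if i is i'.+1 then x :: y :: alternating x y i' else [::].

(* The configurations w^a b^b (w b)^i O (b w)^j w^d b^e (for [wb]) and
   w^a b^b (b w)^i O (w b)^j w^d b^e (otherwise) passed by the classical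
   solution. *)
Definition standard_config a b i j d e (wb : bool) : config :=
  nseq a White ++ nseq b Black ++
  (if wb then alternating White Black i else alternating Black White i) ++ Empty ::
  (if wb then alternating Black White j else alternating White Black j) ++
  nseq d White ++ nseq e Black.

Definition standard (c : config) := exists a b i j d e wb, c = standard_config a b i j d e wb.

Definition sorted_config (c : config) : config :=
  final_config (count_mem Black c) (count_mem White c).

Definition good_step (c : config) :=
  exists mv, [/\ legal c mv, allowed_kindb c mv & standard (apply_move c mv)].

Lemma good_step_by c X Y L s d L' :
  local_move L s d L' -> allowed_kindb (L ++ Y) (Move s d) ->
  c = X ++ L ++ Y -> standard (X ++ L' ++ Y) -> good_step c.
Proof.
move=> hL hA -> hS; have [hl ha] := local_move_cat X Y hL.
by exists (Move (s + size X) (d + size X)); rewrite allowed_kindb_cat ha.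
Qed.

Lemma good_slide_right c X Y : c = X ++ [:: Black; Empty] ++ Y ->
  standard (X ++ [:: Empty; Black] ++ Y) -> good_step c.
Proof. exact: good_step_by (SlideRight (a := Black) isT) isT. Qed.

Lemma good_slide_left c X Y : c = X ++ [:: Empty; White] ++ Y ->
  standard (X ++ [:: White; Empty] ++ Y) -> good_step c.
Proof. exact: good_step_by (SlideLeft (a := White) isT) isT. Qed.

Lemma good_jump_right c X Y : c = X ++ [:: Black; White; Empty] ++ Y ->
  standard (X ++ [:: Empty; White; Black] ++ Y) -> good_step c.
Proof. exact: good_step_by (JumpRight (a := Black) (b := White) isT isT) isT. Qed.

Lemma good_jump_left c X Y : c = X ++ [:: Empty; Black; White] ++ Y ->
  standard (X ++ [:: White; Black; Empty] ++ Y) -> good_step c.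
Proof. exact: good_step_by (JumpLeft (a := White) (b := Black) isT isT) isT. Qed.

Lemma nseq_cat_cons (x : cell) a s : nseq a x ++ x :: s = x :: nseq a x ++ s.
Proof. by elim: a => //= a ->. Qed.

Lemma alternating_cat_cons x y i s : alternating x y i ++ x :: s = x :: alternating y x i ++ s.
Proof. by elim: i x y => //= i IH x y; rewrite IH. Qed.

Ltac normalize_config :=
  rewrite /standard_config; do 6! rewrite -?catA /= ?nseq_cat_cons ?alternating_cat_cons.

Lemma standard_sorted a e wb :
  standard_config a 0 0 0 0 e wb = sorted_config (standard_config a 0 0 0 0 e wb).
Proof.
rewrite /sorted_config /final_config /standard_config.
by case: wb; rewrite /= !count_cat /= !count_nseq /= ?addn0 ?muln1 ?mul0n ?mul1n ?add0n ?addn0.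
Qed.

Lemma good_step_standard_wb a b i j d e :
  standard_config a b i j d e true <> sorted_config (standard_config a b i j d e true) ->
  good_step (standard_config a b i j d e true).
Proof.
case: j => [|j] hne; last first.
  by apply: (good_jump_left (X := nseq a White ++ nseq b Black ++ alternating White Black i)
    (Y := alternating Black White j ++ nseq d White ++ nseq e Black));
    [|exists a, b, i.+1, j, d, e, true]; normalize_config.
case: d hne => [|d] hne.
- case: i hne => [|i] hne.
  + case: b hne => [|b] hne; first by case: hne; rewrite -standard_sorted.
    by apply: (good_slide_right (X := nseq a White ++ nseq b Black) (Y := nseq e Black));
      [|exists a, b, 0, 0, 0, e.+1, true]; normalize_config.
  + case: b hne => [|b] hne.
    * by apply: (good_slide_right (X := nseq a White ++ alternating White Black i ++ [:: White])
        (Y := nseq e Black)); [|exists a.+1, 0, i, 0, 0, e.+1, false]; normalize_config.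
    * by apply: (good_slide_right
        (X := nseq a White ++ nseq b.+1 Black ++ alternating White Black i ++ [:: White])
        (Y := nseq e Black)); [|exists a, b, i.+1, 0, 0, e.+1, false]; normalize_config.
- case: b hne => [|b] hne.
  + by apply: (good_slide_left (X := nseq a White ++ alternating White Black i)
      (Y := nseq d White ++ nseq e Black)); [|exists a.+1, 0, i, 0, d, e, false]; normalize_config.
  + by apply: (good_slide_left (X := nseq a White ++ nseq b.+1 Black ++ alternating White Black i)
      (Y := nseq d White ++ nseq e Black)); [|exists a, b, i.+1, 0, d, e, false]; normalize_config.
Qed.

Lemma good_step_standard_bw a b i j d e :
  standard_config a b i j d e false <> sorted_config (standard_config a b i j d e false) ->
  good_step (standard_config a b i j d e false).
Proof.
case: i => [|i] hne; last first.
  by apply: (good_jump_right (X := nseq a White ++ nseq b Black ++ alternating Black White i)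
    (Y := alternating White Black j ++ nseq d White ++ nseq e Black));
    [|exists a, b, i, j.+1, d, e, false]; normalize_config.
case: b hne => [|b] hne.
- case: j hne => [|j] hne.
  + case: d hne => [|d] hne; first by case: hne; rewrite -standard_sorted.
    by apply: (good_slide_left (X := nseq a White) (Y := nseq d White ++ nseq e Black));
      [|exists a.+1, 0, 0, 0, d, e, false]; normalize_config.
  + case: d hne => [|d] hne.
    * by apply: (good_slide_left (X := nseq a White)
        (Y := Black :: alternating White Black j ++ nseq e Black));
        [|exists a.+1, 0, 0, j, 0, e.+1, true]; normalize_config.
    * by apply: (good_slide_left (X := nseq a White)
        (Y := Black :: alternating White Black j ++ nseq d.+1 White ++ nseq e Black));
        [|exists a.+1, 0, 0, j.+1, d, e, true]; normalize_config.
- case: d hne => [|d] hne.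
  + by apply: (good_slide_right (X := nseq a White ++ nseq b Black)
      (Y := alternating White Black j ++ nseq e Black));
      [|exists a, b, 0, j, 0, e.+1, true]; normalize_config.
  + by apply: (good_slide_right (X := nseq a White ++ nseq b Black)
      (Y := alternating White Black j ++ nseq d.+1 White ++ nseq e Black));
      [|exists a, b, 0, j.+1, d, e, true]; normalize_config.
Qed.

Lemma standard_good_step c : standard c -> c <> sorted_config c -> good_step c.
Proof.
move=> [a [b [i [j [d [e [[] ->]]]]]]].
- exact: good_step_standard_wb.
- exact: good_step_standard_bw.
Qed.

Lemma standard_vacancy c : standard c -> count_mem Empty c = 1.
Proof.
have alt0 x y i : x != Empty -> y != Empty -> count_mem Empty (alternating x y i) = 0.
  by move=> /negbTE-hx /negbTE-hy; elim: i => //= i ->; rewrite hx hy.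
move=> [a [b [i [j [d [e [wb ->]]]]]]].
by rewrite /standard_config !count_cat /= !count_cat !count_nseq; case: wb; rewrite !alt0.
Qed.

Lemma standard_runs_sorted k c : standard c -> inversions c + wrong_side c = k ->
  exists ms, runs c ms (sorted_config c) /\ size ms = k.
Proof.
elim: k c => [|k IH] c sc hk; case: (c =P sorted_config c) => [e|ne].
- by exists [::].
- have [mv [hl ha _]] := standard_good_step sc ne.
  by have := distance_step (standard_vacancy sc) hl ha; lia.
- move: hk; rewrite e /sorted_config.
  by case: (final_config_stats (count_mem Black c) (count_mem White c)) => -> ->.
- have [mv [hl ha sc']] := standard_good_step sc ne.
  have hc := standard_vacancy sc.
  have hk' : inversions (apply_move c mv) + wrong_side (apply_move c mv) = k.
    by have := distance_step hc hl ha; lia.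
  have [ms [hr hs]] := IH _ sc' hk'.
  exists (mv :: ms); split; last by rewrite /= hs.
  by split => //; move: hr; rewrite /sorted_config !(count_apply_move _ hc hl).
Qed.

Theorem lemma1 (n m : nat) (ms : seq move) :
  1 <= n -> 1 <= m -> optimal_solution n m ms ->
  all_allowed (init_config n m) ms.
Proof.
move=> n_gt0 m_gt0 [sol opt].
have [vac inv ws] := init_config_stats n m.
have [finv fws] := final_config_stats n m.
have std : standard (init_config n m).
  by exists 0, n, 0, 0, m, 0, true; rewrite /standard_config /init_config /= cats0.
have sorted : sorted_config (init_config n m) = final_config n m.
  by rewrite /sorted_config /init_config !count_cat /= !count_nseq /=; congr final_config; lia.
have [ms0 [run0 size0]] := standard_runs_sorted std (erefl _).
have short : size ms <= size ms0 by apply: opt; rewrite /solution -sorted.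
have slides := slide_invariant_final n_gt0 m_gt0
  (runs_slide_invariant vac sol (slide_invariant_init n m)).
apply: all_allowed_disallowed0.
by move: (runs_potential vac sol) slides short; rewrite inv ws finv fws size0; lia.
Qed.
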